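(* For all integers $i$ and $k$ such that $k+3\leq i\leq 2k+2$, we have $R_k^{\mathcal{SP}}(i,i)=3i-2k-4$, where $\mathcal{SP}$ is the class of split graphs.
   Context: All graphs are finite and simple. For a graph $G$ and a nonnegative integer $k$, a $k$-sparse $j$-set is a set of $j$ vertices of $G$ inducing a subgraph of maximum degree at most $k$; a $k$-dense $i$-set is a set of $i$ vertices of $G$ that is $k$-sparse in the complement of $G$. For a graph class $\mathcal{G}$, $R_k^{\mathcal{G}}(i,j)$ is the smallest natural number $n$ such that every graph on $n$ vertices in $\mathcal{G}$ has either a $k$-dense $i$-set or a $k$-sparse $j$-set. A split graph is a graph whose vertex set can be partitioned into a clique and an independent set. *)

From mathcomp Require Import all_boot.
Set Implicit Arguments. Unset Strict Implicit. Unset Printing Implicit Defensive.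

Definition simple_graph (n : nat) (e : rel 'I_n) : Prop :=
  (forall x y, e x y = e y x) /\ (forall x, ~~ e x x).

Definition compl_rel (n : nat) (e : rel 'I_n) : rel 'I_n :=
  fun x y => (x != y) && ~~ e x y.

Definition k_sparse_set (n : nat) (e : rel 'I_n) (k : nat) (S : {set 'I_n}) : bool :=
  [forall x in S, #|[set y in S | e x y]| <= k].

Definition k_sparse_jset n (e : rel 'I_n) k j (S : {set 'I_n}) : bool :=
  (#|S| == j) && k_sparse_set e k S.

Definition k_dense_iset n (e : rel 'I_n) k i (S : {set 'I_n}) : bool :=
  (#|S| == i) && k_sparse_set (compl_rel e) k S.

Definition split_graph (n : nat) (e : rel 'I_n) : Prop :=
  exists C : {set 'I_n},
    (forall x y, x \in C -> y \in C -> x != y -> e x y) /\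
    (forall x y, x \in ~: C -> y \in ~: C -> ~~ e x y).

Definition ramsey_prop_split (k i j n : nat) : Prop :=
  forall e : rel 'I_n, simple_graph e -> split_graph e ->
    (exists S, k_dense_iset e k i S) \/ (exists S, k_sparse_jset e k j S).

Definition is_ramsey_split (k i j r : nat) : Prop :=
  ramsey_prop_split k i j r /\ (forall m, m < r -> ~ ramsey_prop_split k i j m).

From mathcomp Require Import all_boot zify.

Set Implicit Arguments. Unset Strict Implicit. Unset Printing Implicit Defensive.

(* Let C be the clique and I the independent side of a split
   graph on 3i - 2k - 4 vertices; we may assume |C|, |I| < i.  Put
   t = i - k - 1 and call a vertex of C low if it misses fewer than t vertices
   of I, and a vertex of I low if it sees fewer than t vertices of C.  Counting
   the edges between 2t - 1 low vertices on each side gives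
   t (2t - 1) <= (t - 1)(2t - 1), so one side has at most 2t - 2 low vertices.
   If it is C, then I together with i - |I| non-low vertices of C is a k-sparse
   i-set; if it is I, the same argument in the complement, where the roles of
   C and I are swapped, gives a k-dense i-set.

   On m <= 3i - 2k - 5 vertices take a clique on D = i - 1
   vertices and independent vertices split into two blocks of size at most
   s = i - k - 2; the clique vertices 0..s-1 are joined to the first block and
   s..2s-1 to the second.  In a k-sparse set containing one of these 2s clique
   vertices, all but at most k of the other members are non-neighbours and lie in
   a single block; likewise for a k-dense set containing an independent vertex.
   Either way the set has at most k + s + 1 = i - 1 elements, and a set avoiding
   such vertices lies inside the remaining i - 1 vertices. *)

Lemma exists_subset_card (T : finType) (A : {set T}) m :
  m <= #|A| -> exists2 B : {set T}, B \subset A & #|B| = m.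
Proof.
rewrite -bin_gt0 -cards_draws => /card_gt0P[B].
by rewrite inE => /andP[BA /eqP cardB]; exists B.
Qed.

Lemma leq_card_interval m lo hi : #|[set y : 'I_m | lo <= y < hi]| <= hi - lo.
Proof.
rewrite cardE -(size_map val) -(size_iota lo (hi - lo)).
apply: uniq_leq_size; first by rewrite map_inj_uniq ?enum_uniq //; exact: val_inj.
move=> z /mapP[y]; rewrite mem_enum inE => /andP[loy yhi] ->.
by rewrite mem_iota /=; lia.
Qed.

Lemma cards_in_predC (T : finType) (A : {set T}) (p : pred T) :
  #|[set x in A | p x]| + #|[set x in A | ~~ p x]| = #|A|.
Proof.
by rewrite -(cardsID [set x | p x] A); congr (_ + _); apply: eq_card => x;
  rewrite !inE andbC.
Qed.

Lemma double_count_cards (T : finType) (r : rel T) (A B : {set T}) :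
  \sum_(x in A) #|[set y in B | r x y]| = \sum_(y in B) #|[set x in A | r x y]|.
Proof.
have card_indicator (P : {set T}) (p : pred T) :
    #|[set z in P | p z]| = \sum_(z in P) p z.
  by rewrite -sum1dep_card big_mkcondr /=; apply: eq_bigr => z _; case: (p z).
under eq_bigr do rewrite card_indicator.
by rewrite exchange_big; apply: eq_bigr => y _; rewrite card_indicator.
Qed.

Lemma leq_double_count (T : finType) (r : rel T) (A B : {set T}) a b :
  {in A, forall x, a <= #|[set y in B | r x y]|} ->
  {in B, forall y, #|[set x in A | r x y]| <= b} ->
  a * #|A| <= b * #|B|.
Proof.
move=> degA degB; rewrite mulnC [b * _]mulnC -!sum_nat_const.
apply: (@leq_trans (\sum_(x in A) #|[set y in B | r x y]|)).
  exact: leq_sum degA.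
by rewrite double_count_cards; exact: leq_sum degB.
Qed.

Lemma sparse_card_le_nonadj n (e : rel 'I_n) k (S O : {set 'I_n}) x :
  k_sparse_set e k S -> x \in S ->
  {in S, forall y, y != x -> ~~ e x y -> y \in O} ->
  #|S| <= k + #|O| + 1.
Proof.
move=> /forallP/(_ x)/implyP Ssparse xS nonadjO.
have cover : S \subset x |: ([set y in S | e x y] :|: O).
  apply/subsetP => y yS; rewrite !inE yS /=.
  case: eqVneq => //= yx; case exy: (e x y) => //=.
  by rewrite nonadjO ?exy.
apply: leq_trans (subset_leq_card cover) _.
rewrite cardsU1 addnC leq_add ?leq_b1 //.
exact: leq_trans (leq_card_setU _ _) (leq_add (Ssparse xS) (leqnn _)).
Qed.

Definition split_partition n (e : rel 'I_n) (C : {set 'I_n}) : Prop :=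
  (forall x y, x \in C -> y \in C -> x != y -> e x y) /\
  (forall x y, x \in ~: C -> y \in ~: C -> ~~ e x y).

Lemma split_partition_compl n (e : rel 'I_n) C :
  split_partition e C -> split_partition (compl_rel e) (~: C).
Proof.
move=> [Cclique Cindep]; split=> x y.
  by move=> xC yC xy; rewrite /compl_rel xy Cindep.
rewrite setCK /compl_rel => xC yC; case: eqVneq => //= xy.
by rewrite Cclique.
Qed.

Lemma indep_sparse_iset n (e : rel 'I_n) (I : {set 'I_n}) k i :
  (forall x y, x \in I -> y \in I -> ~~ e x y) -> i <= #|I| ->
  exists S, k_sparse_jset e k i S.
Proof.
move=> Iindep /exists_subset_card[S SI cardS].
exists S; rewrite /k_sparse_jset cardS eqxx.
apply/forallP => x; apply/implyP => xS.
rewrite (_ : [set y in S | e x y] = set0) ?cards0 //.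
apply/setP => y; rewrite !inE; apply/andP => -[yS].
by apply/negP; rewrite Iindep ?(subsetP SI).
Qed.

Definition low_codegree n (e : rel 'I_n) (C : {set 'I_n}) t :=
  [set v in C | #|[set u in ~: C | ~~ e v u]| < t].

Lemma low_codegree_compl n (e : rel 'I_n) C t :
  low_codegree (compl_rel e) (~: C) t =
  [set u in ~: C | #|[set v in C | e u v]| < t].
Proof.
apply/setP => u; rewrite !inE setCK; case uC: (u \in C) => //=.
congr (_ < _); apply: eq_card => v; rewrite !inE /compl_rel.
case vC: (v \in C) => //=.
have -> : u != v by apply/eqP => uv; rewrite uv vC in uC.
by rewrite negbK.
Qed.

Lemma low_codegree_small n (e : rel 'I_n) C t :
  (forall x y, e x y = e y x) -> 0 < t ->
  #|low_codegree e C t| < (2 * t).-1 \/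
  #|low_codegree (compl_rel e) (~: C) t| < (2 * t).-1.
Proof.
move=> e_sym t_gt0; rewrite low_codegree_compl.
set X := low_codegree e C t; set Y := [set u in ~: C | _].
have [|leX] := ltnP #|X| (2 * t).-1; [by left | right].
rewrite ltnNge; apply/negP => /exists_subset_card[Y' Y'Y cardY'].
have [X' X'X cardX'] := exists_subset_card leX.
suff : t * #|X'| <= t.-1 * #|Y'| by rewrite cardX' cardY'; nia.
apply: (@leq_double_count 'I_n e) => [x /(subsetP X'X) | y /(subsetP Y'Y)].
  rewrite inE => /andP[xC lowx].
  have nonadj : [set y in Y' | ~~ e x y] \subset [set u in ~: C | ~~ e x u].
    apply/subsetP => y; rewrite !inE => /andP[/(subsetP Y'Y)].
    by rewrite !inE => /andP[-> _] ->.
  move: (subset_leq_card nonadj) (cards_in_predC Y' (fun y => e x y)); lia.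
rewrite inE => /andP[_ lowy]; rewrite -ltnS (ltn_predK t_gt0).
apply: leq_ltn_trans lowy; apply: subset_leq_card; apply/subsetP => x.
rewrite !inE e_sym => /andP[/(subsetP X'X)].
by rewrite !inE => /andP[-> _] ->.
Qed.

Lemma split_sparse_iset n (e : rel 'I_n) (C : {set 'I_n}) k i t :
  (forall x, ~~ e x x) -> (forall x y, x \in ~: C -> y \in ~: C -> ~~ e x y) ->
  #|~: C| <= i -> i <= k + #|~: C| -> i <= k + t + 1 ->
  i + #|low_codegree e C t| <= n ->
  exists S, k_sparse_jset e k i S.
Proof.
move=> e_irr Cindep leIi le_i_kI le_i_kt le_iX_n.
set X := low_codegree e C t in le_iX_n.
have XC : X \subset C by apply/subsetP => v; rewrite inE => /andP[].
have cardCI : #|C| + #|~: C| = n by rewrite cardsC card_ord.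
have [C' C'CX cardC'] :
    exists2 C' : {set 'I_n}, C' \subset C :\: X & #|C'| = i - #|~: C|.
  apply: exists_subset_card; rewrite cardsDS //.
  by move: (subset_leq_card XC); lia.
have C'C : C' \subset C := subset_trans C'CX (subsetDl _ _).
have /eqP cardS : #|C' :|: ~: C| == #|C'| + #|~: C|.
  by rewrite (leq_card_setU C' (~: C)).2 -subsets_disjoint.
exists (C' :|: ~: C); rewrite /k_sparse_jset cardS cardC' subnK // eqxx /=.
apply/forallP => x; apply/implyP; rewrite inE => /orP[xC' | xI].
  have xX : x \notin X by move: (subsetP C'CX x xC'); rewrite inE => /andP[].
  have xC := subsetP C'C x xC'.
  have nbrs : [set y in C' :|: ~: C | e x y] \subset
              (C' :\ x) :|: [set u in ~: C | e x u].
    apply/subsetP => y; rewrite !inE => /andP[/orP[yC' | yI] exy].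
      rewrite yC' andbT; case: eqVneq exy => // ->.
      by rewrite (negbTE (e_irr x)).
    by rewrite yI exy orbT.
  have codeg :
      #|[set u in ~: C | e x u]| + #|[set u in ~: C | ~~ e x u]| = #|~: C|.
    exact: cards_in_predC.
  have union : #|(C' :\ x) :|: [set u in ~: C | e x u]| <=
               #|C' :\ x| + #|[set u in ~: C | e x u]| := leq_card_setU _ _.
  have cardC'x : #|C'| = 1 + #|C' :\ x| by rewrite (cardsD1 x C') xC'.
  apply: leq_trans (subset_leq_card nbrs) (leq_trans union _).
  have codeg_x : t <= #|[set u in ~: C | ~~ e x u]|.
    by move: xX; rewrite inE xC /= -leqNgt.
  lia.
have nbrs : [set y in C' :|: ~: C | e x y] \subset C'.
  apply/subsetP => y; rewrite !inE => /andP[/orP[// | yI] exy].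
  by move: (Cindep x y xI); rewrite inE yI exy => /(_ isT).
by apply: leq_trans (subset_leq_card nbrs) _; rewrite cardC'; lia.
Qed.

Definition block_edge (s D v w : nat) : bool :=
  (v < s) && (D <= w < D + s) || (s <= v < 2 * s) && (D + s <= w).

Definition lower_graph {n} (s D : nat) : rel 'I_n := fun x y =>
  (x != y) && [|| (x < D) && (y < D), block_edge s D x y | block_edge s D y x].

Lemma lower_graph_simple_split n s D :
  2 * s <= D ->
  simple_graph (lower_graph s D : rel 'I_n) /\
  split_graph (lower_graph s D : rel 'I_n).
Proof.
move=> le2sD; split.
  split=> [x y|x]; last by rewrite /lower_graph eqxx.
  rewrite /lower_graph eq_sym [(x < D) && _]andbC.
  by rewrite [block_edge _ _ x y || _]orbC.
exists [set x : 'I_n | x < D]; split=> x y; rewrite !inE /lower_graph.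
  by move=> -> -> ->.
rewrite /block_edge; lia.
Qed.

Lemma lower_graph_sparse_card m s D k (S : {set 'I_m}) :
  2 * s <= D -> m <= D + 2 * s -> k + s < D ->
  k_sparse_set (lower_graph s D) k S -> #|S| <= D.
Proof.
move=> le2sD lemD ltksD Ssparse.
case: (pickP [pred x in S | x < 2 * s]) => [x /andP[xS xlt] | high].
  set O := [set y : 'I_m |
    if x < s then D + s <= y < D + 2 * s else D <= y < D + s].
  have cardO : #|O| <= s.
    rewrite /O; case: (x < s);
      by apply: leq_trans (leq_card_interval _ _ _) _; lia.
  apply: leq_trans (sparse_card_le_nonadj (O := O) Ssparse xS _) _; last first.
    by rewrite addn1; apply: leq_trans ltksD; rewrite ltnS leq_add2l.
  move=> y yS; rewrite eq_sym => /negbTE xy.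
  rewrite /lower_graph xy /block_edge inE; move: (ltn_ord y); case: ifP; lia.
have Shigh : S \subset [set y : 'I_m | 2 * s <= y < D + 2 * s].
  apply/subsetP => y yS; move: (high y) (ltn_ord y); rewrite /= yS inE /=; lia.
apply: leq_trans (subset_leq_card Shigh) _.
by apply: leq_trans (leq_card_interval _ _ _) _; lia.
Qed.

Lemma lower_graph_dense_card m s D k (S : {set 'I_m}) :
  2 * s <= D -> k + s < D ->
  k_sparse_set (compl_rel (lower_graph s D)) k S -> #|S| <= D.
Proof.
move=> le2sD ltksD Sdense.
case: (pickP [pred x in S | D <= x]) => [x /andP[xS xge] | low].
  set O := [set y : 'I_m | if x < D + s then 0 <= y < s else s <= y < 2 * s].
  have cardO : #|O| <= s.
    rewrite /O; case: (x < D + s);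
      by apply: leq_trans (leq_card_interval _ _ _) _; lia.
  apply: leq_trans (sparse_card_le_nonadj (O := O) Sdense xS _) _; last first.
    by rewrite addn1; apply: leq_trans ltksD; rewrite ltnS leq_add2l.
  move=> y yS; rewrite eq_sym => xy.
  rewrite /compl_rel xy negbK /lower_graph xy /block_edge inE; case: ifP; lia.
have Slow : S \subset [set y : 'I_m | 0 <= y < D].
  apply/subsetP => y yS; move: (low y); rewrite /= yS inE /=; lia.
apply: leq_trans (subset_leq_card Slow) _.
by apply: leq_trans (leq_card_interval _ _ _) _; lia.
Qed.

Lemma ramsey_split_upper k i :
  k + 3 <= i -> ramsey_prop_split k i i (3 * i - 2 * k - 4).
Proof.
move=> le_k3_i e [e_sym e_irr] [C splitC].
have [_ Cindep] := splitC.
have [_ Ccindep] := split_partition_compl splitC.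
have compl_irr x : ~~ compl_rel e x x by rewrite /compl_rel eqxx.
have cardCI : #|C| + #|~: C| = 3 * i - 2 * k - 4 by rewrite cardsC card_ord.
have [leiI | ltIi] := leqP i #|~: C|.
  by right; apply: indep_sparse_iset Cindep leiI.
have [leiC | ltCi] := leqP i #|C|.
  by left; apply: indep_sparse_iset Ccindep _; rewrite setCK.
have t_gt0 : 0 < i - k - 1 by lia.
have [lowC | lowI] := low_codegree_small C e_sym t_gt0.
  by right; apply: (split_sparse_iset (t := i - k - 1)) e_irr Cindep _ _ _ _; lia.
left; apply: (split_sparse_iset (t := i - k - 1)) compl_irr Ccindep _ _ _ _;
  rewrite ?setCK; lia.
Qed.

Lemma ramsey_split_lower k i m :
  k + 2 <= i -> i <= 2 * k + 3 -> m < 3 * i - 2 * k - 4 ->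
  ~ ramsey_prop_split k i i m.
Proof.
move=> le_k2_i le_i_2k3 ltm Hramsey.
have le2sD : 2 * (i - k - 2) <= i - 1 by lia.
have lemD : m <= i - 1 + 2 * (i - k - 2) by lia.
have ltksD : k + (i - k - 2) < i - 1 by lia.
have [G_simple G_split] := lower_graph_simple_split m le2sD.
have [[S /andP[/eqP cardS Sdense]] | [S /andP[/eqP cardS Ssparse]]] :=
  Hramsey _ G_simple G_split.
  by move: (lower_graph_dense_card le2sD ltksD Sdense); lia.
by move: (lower_graph_sparse_card le2sD lemD ltksD Ssparse); lia.
Qed.

Theorem theorem6p3 (i k : nat) :
  k + 3 <= i -> i <= 2 * k + 2 ->
  is_ramsey_split k i i (3 * i - 2 * k - 4).
Proof.
move=> le_k3_i le_i_2k2; split; first exact: ramsey_split_upper.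
by move=> m; apply: ramsey_split_lower; lia.
Qed.
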